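(* Assume $\sigma_1\equiv0$ and consider excess-of-loss reinsurance, with retention level $u\in[0,\infty]$, $m(t,y,u)=\theta\int_0^u\bar F(z)\,dz-(\theta-\eta)\mathbb E[Z]$ and $\sigma(t,y,u)=\sqrt{\int_0^u2z\bar F(z)\,dz}$. Then the optimal retention level is $$u^*(x)=\frac{\theta}{A(x)}.$$
   Context: $Z$ is a claim size with distribution function $F$ on $[0,\infty)$, $\bar F=1-F$, $\mathbb E[Z]<\infty$ and $F(z)<1$ for all $z\in[0,\infty)$; $\theta,\eta>0$ are the reinsurer's and the insurer's safety loadings. With retention $u_t$ and amount $a_t$ invested in a risky asset with drift $\mu(t,y)>0$ and volatility $\sigma_2(t,y)>0$ (driven by a Brownian motion $W^2$ independent of $W^1$; $\sigma_1\equiv0$), the surplus is $dX_t=\{m(t,Y_t,u_t)+a_t\mu(t,Y_t)\}dt+\sigma(t,Y_t,u_t)dW^1_t+a_t\sigma_2(t,Y_t)dW^2_t$, where $Y$ is an environmental diffusion, and the insurer maximises $\mathbb E[U(X_T)]$. The optimal retention is the maximiser in the HJB equation under the ansatz $V(t,x,y)=U(x)\tilde V(t,y)$ for the value function, i.e. the maximiser over $u\in[0,\infty]$ of $\theta\int_0^u\bar F(z)dz-\frac{A(x)}{2}\int_0^u2z\bar F(z)dz$. $U$ is a SAHARA utility: $A(x):=-U''(x)/U'(x)=\alpha/\sqrt{b^2+(x-d)^2}$, $\alpha>0$, $b>0$, $d\in\mathbb R$. *)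

From HB Require Import structures.
From mathcomp Require Import all_boot all_order all_algebra.
From mathcomp Require Import all_classical all_reals all_analysis.
Set Implicit Arguments. Unset Strict Implicit. Unset Printing Implicit Defensive.
Import Order.TTheory GRing.Theory Num.Theory.
Import numFieldNormedType.Exports.
Local Open Scope classical_set_scope.
Local Open Scope ring_scope.

Definition Fbar {R : realType} (F : R -> R) (z : R) : R := 1 - F z.

Definition is_cdf_on_nonneg {R : realType} (F : R -> R) : Prop :=
  {homo F : x y / x <= y} /\
  (forall x : R, F x @[y --> x^'+] --> F x) /\
  (forall z : R, z < 0 -> F z = 0) /\
  (F x @[x --> +oo] --> (1 : R)).

Definition Icc0 {R : realType} (u : \bar R) : set R :=
  [set z : R | 0 <= z /\ (z%:E <= u)%E].

Definition sahara_A {R : realType} (alpha b d x : R) : R :=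
  alpha / Num.sqrt (b ^+ 2 + (x - d) ^+ 2).

(* HJB objective in the retention u in [0, +oo]:
   theta * int_0^u Fbar - (A/2) * int_0^u 2 z Fbar(z) dz   (extended-real valued) *)
Definition retention_objective {R : realType} (F : R -> R) (theta Ax : R)
    (u : \bar R) : \bar R :=
  (theta%:E * (\int[lebesgue_measure]_(z in Icc0 u) (Fbar F z)%:E)
   - (Ax / 2)%:E * (\int[lebesgue_measure]_(z in Icc0 u) (2 * z * Fbar F z)%:E))%E.

From HB Require Import structures.
From mathcomp Require Import all_boot all_order all_algebra.
From mathcomp Require Import all_classical all_reals all_analysis.
From mathcomp Require Import measurable_realfun.
From mathcomp Require Import ring lra.
Import Order.TTheory GRing.Theory Num.Theory.
Import numFieldNormedType.Exports.
Local Open Scope classical_set_scope.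
Local Open Scope ring_scope.

(* Write A = A(x) > 0 and u* = theta / A.  For finite u the objective is
   J(u) = int_0^u g with g(z) = (theta - A z) Fbar(z) = A (u* - z) Fbar(z).  Since
   Fbar > 0, g is positive before u* and negative after it, so J strictly increases
   on [0, u*] and strictly decreases on [u*, oo).  For u = +oo, theta int Fbar is
   finite while theta Fbar(z) <= A z Fbar(z) beyond u*, so J(+oo) <= J(w) for every
   finite w >= u*. *)

Section lebesgue_itv.
Context {R : realType}.
Local Notation mu := (@lebesgue_measure R).

Lemma lebesgue_measure_Icc_lty (a b : R) : (mu `[a, b] < +oo)%E.
Proof. by rewrite lebesgue_measure_itv/=; case: ifP => // _; rewrite ltry. Qed.

Lemma bounded_integrable_Icc (a b M : R) (D : set R) (f : R -> R) :
  measurable D -> D `<=` `[a, b] -> measurable_fun D f ->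
  (forall z, D z -> `|f z| <= M) -> mu.-integrable D (EFin \o f).
Proof.
move=> mD Dab mf fM; apply: measurable_bounded_integrable => //.
  apply: le_lt_trans (lebesgue_measure_Icc_lty a b).
  by apply: le_measure => //; rewrite inE.
rewrite /bounded_near; near=> N => z Dz /=; apply: le_trans (fM z Dz) _.
near: N; exact: nbhs_pinfty_ge (num_real M).
Unshelve. all: by end_near. Qed.

Lemma integral_gt0_oc (D : set R) (f : R -> R) (a b c : R) :
  measurable D -> measurable_fun D f -> (forall z, D z -> 0 <= f z) ->
  `]a, b] `<=` D -> a < b -> 0 < c -> (forall z, a < z <= b -> c <= f z) ->
  (0 < \int[mu]_(z in D) (f z)%:E)%E.
Proof.
move=> mD mf f0 abD ab c0 cf.
have mab : measurable (`]a, b] : set R) by exact: measurable_itv.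
have mfE : measurable_fun D (EFin \o f) by exact/measurable_EFinP.
apply: (@lt_le_trans _ _ (\int[mu]_(z in `]a, b]) (f z)%:E)%E); last first.
  by apply: ge0_subset_integral => // z Dz; rewrite lee_fin f0.
apply: (@lt_le_trans _ _ (\int[mu]_(z in `]a, b]) cst c%:E z)%E).
  rewrite integral_cst //= [X in (_ * X)%E]lebesgue_measure_itv/= lte_fin ab.
  by rewrite -EFinB -EFinM lte_fin mulr_gt0 ?subr_gt0.
apply: ge0_le_integral => //.
- by move=> z _; rewrite lee_fin ltW.
- exact: measurable_funS mfE.
Qed.

Lemma lt_Rintegral_oc (D : set R) (f h : R -> R) (a b c : R) :
  measurable D -> mu.-integrable D (EFin \o f) -> mu.-integrable D (EFin \o h) ->
  (forall z, D z -> f z <= h z) ->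
  `]a, b] `<=` D -> a < b -> 0 < c -> (forall z, a < z <= b -> f z + c <= h z) ->
  \int[mu]_(z in D) f z < \int[mu]_(z in D) h z.
Proof.
move=> mD intf inth fh abD ab c0 cfh.
have inthf : mu.-integrable D ((EFin \o h) \- (EFin \o f))%E by exact: integrableB.
rewrite -subr_gt0 -RintegralB //; apply: fine_gt0; apply/andP; split.
  apply: (@integral_gt0_oc D (h \- f) a b c mD _ _ abD ab c0).
  - by apply/measurable_EFinP; exact: measurable_int inthf.
  - by move=> z /fh; rewrite subr_ge0.
  - by move=> z /cfh; rewrite lerBrDl addrC.
rewrite -ge0_fin_numE; first exact: integrable_fin_num inthf.
by apply: integral_ge0 => z /fh; rewrite lee_fin subr_ge0.
Qed.

Lemma Icc0_EFin (r : R) : Icc0 r%:E = `[0, r]%classic.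
Proof.
apply/seteqP; split => z /=; rewrite in_itv/= /Icc0/= lee_fin.
  by case=> -> ->.
by case/andP=> -> ->.
Qed.

Lemma Icc0_pinfty_setU (w : R) : 0 <= w -> Icc0 +oo = `[0, w]%classic `|` `]w, +oo[%classic.
Proof.
move=> w0; apply/seteqP; split => z /=; rewrite !in_itv/= /Icc0/= ?andbT.
- by move=> [z0 _]; have [zw|wz] := leP z w; [left; rewrite z0 | right].
- by move=> [/andP[z0 _]|/ltW wz]; split; rewrite ?leey // (le_trans w0).
Qed.

Lemma integral_Icc0_pinfty_split (f : R -> R) (w : R) : 0 <= w ->
  measurable_fun setT f -> (forall z, 0 <= z -> 0 <= f z) ->
  (\int[mu]_(z in Icc0 +oo) (f z)%:E =
   \int[mu]_(z in `[0%R, w]%classic) (f z)%:E +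
   \int[mu]_(z in `]w, +oo[%classic) (f z)%:E)%E.
Proof.
move=> w0 mf f0; rewrite (Icc0_pinfty_setU _ w0) ge0_integral_setU //.
- by apply/measurable_EFinP; exact: measurable_funS mf.
- by move=> z; rewrite -(Icc0_pinfty_setU _ w0) => -[z0 _]; rewrite lee_fin f0.
- apply/disj_setPS => z [] /=; rewrite !in_itv/= andbT => /andP[_ zw] wz.
  by move: (lt_le_trans wz zw); rewrite ltxx.
Qed.

End lebesgue_itv.

Section retention.
Context {R : realType}.
Local Notation mu := (@lebesgue_measure R).
Variable F : R -> R.
Hypothesis F_nondecr : {homo F : x y / x <= y}.
Hypothesis F_lt1 : forall z, F z < 1.

Lemma Fbar_gt0 z : 0 < Fbar F z.
Proof. by rewrite /Fbar subr_gt0. Qed.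

Lemma le_Fbar y z : y <= z -> Fbar F z <= Fbar F y.
Proof. by move=> yz; rewrite /Fbar lerB // F_nondecr. Qed.

Lemma measurable_Fbar (D : set R) : measurable D -> measurable_fun D (Fbar F).
Proof.
move=> mD; apply: (@measurable_funB _ _ _ _ (cst 1) F) => //.
exact: nondecreasing_measurable.
Qed.

Lemma integrable_affine_Fbar (D : set R) (r p q : R) :
  measurable D -> D `<=` `[0, r] ->
  mu.-integrable D (EFin \o (fun z => (p + q * z) * Fbar F z)).
Proof.
move=> mD Dr; apply: (bounded_integrable_Icc _ _ ((`|p| + `|q| * r) * Fbar F 0) _ _ mD Dr).
  by apply: measurable_funM; [exact: measurable_funD | exact: measurable_Fbar].
move=> z /Dr; rewrite /= in_itv/= => /andP[z0 zr].
rewrite normrM (gtr0_norm (Fbar_gt0 z)); apply: ler_pM => //; last exact: le_Fbar.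
  exact/ltW/Fbar_gt0.
by rewrite (le_trans (ler_normD _ _)) // lerD2l normrM ler_wpM2l // ger0_norm.
Qed.

Lemma integrable_Fbar (r : R) : mu.-integrable `[0, r] (EFin \o Fbar F).
Proof.
apply: (eq_integrable _ _ _ _
  (integrable_affine_Fbar _ r 1 0 (measurable_itv _) (subset_refl _))) => // z _ /=.
by rewrite mul0r addr0 mul1r.
Qed.

Lemma integrable_2z_Fbar (r : R) :
  mu.-integrable `[0, r] (EFin \o (fun z => 2 * z * Fbar F z)).
Proof.
apply: (eq_integrable _ _ _ _
  (integrable_affine_Fbar _ r 0 2 (measurable_itv _) (subset_refl _))) => // z _ /=.
by rewrite add0r.
Qed.

Variables (theta A us : R).
Hypotheses (A_gt0 : 0 < A) (us_gt0 : 0 < us) (theta_eq : theta = A * us).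

Definition retention_gain (z : R) : R := (theta - A * z) * Fbar F z.

Local Notation g := retention_gain.
Local Notation J u := (retention_objective F theta A u).

Lemma retention_gainE z : g z = A * (us - z) * Fbar F z.
Proof. by rewrite /retention_gain theta_eq -mulrBr. Qed.

Lemma integrable_retention_gain (D : set R) (r : R) :
  measurable D -> D `<=` `[0, r] -> mu.-integrable D (EFin \o g).
Proof.
move=> mD Dr.
apply: (eq_integrable _ _ _ _ (integrable_affine_Fbar _ _ theta (- A) mD Dr)) => // z _ /=.
by rewrite mulNr.
Qed.

Lemma retention_objective_EFin (r : R) : 0 <= r ->
  J r%:E = (\int[mu]_(z in `[0, r]) g z)%:E.
Proof.
move=> r0; rewrite /retention_objective Icc0_EFin /Rintegral fineK; last first.
  by apply: integrable_fin_num => //; apply: (integrable_retention_gain _ r).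
have iF := integrable_Fbar r; have i2 := integrable_2z_Fbar r.
rewrite -(integralZl _ iF) // -(integralZl _ i2) // -integralB //; last 2 first.
- exact: integrableZl.
- exact: integrableZl.
apply: eq_integral => z _; rewrite -!EFinM -EFinB /retention_gain; congr EFin.
by field.
Qed.

Lemma retention_gain_ge0 (z : R) : z <= us -> 0 <= g z.
Proof.
move=> zus; rewrite retention_gainE; apply/mulr_ge0/ltW/Fbar_gt0.
by rewrite mulr_ge0 ?subr_ge0 // ltW.
Qed.

Lemma retention_gain_le0 (z : R) : us <= z -> g z <= 0.
Proof.
move=> usz; rewrite retention_gainE -opprB mulrN mulNr oppr_le0.
apply/mulr_ge0/ltW/Fbar_gt0.
by rewrite mulr_ge0 ?subr_ge0 // ltW.
Qed.

Lemma retention_gain_ge (m z : R) : z <= m -> m <= us ->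
  A * (us - m) * Fbar F us <= g z.
Proof.
move=> zm mus; rewrite retention_gainE; apply: ler_pM.
- by rewrite mulr_ge0 ?subr_ge0 // ltW.
- exact/ltW/Fbar_gt0.
- by rewrite ler_pM2l // lerB.
- exact/le_Fbar/(le_trans zm).
Qed.

Lemma retention_gain_le (m w z : R) : us <= m -> m <= z -> z <= w ->
  g z <= - (A * (m - us) * Fbar F w).
Proof.
move=> usm mz zw; rewrite retention_gainE -opprB mulrN mulNr lerN2.
apply: ler_pM.
- by rewrite mulr_ge0 ?subr_ge0 // ltW.
- exact/ltW/Fbar_gt0.
- by rewrite ler_pM2l // lerB.
- exact: le_Fbar.
Qed.

Lemma Rintegral_retention_gain_gt0 (u : R) : 0 <= u -> u < us ->
  0 < \int[mu]_(z in `]u, us]) g z.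
Proof.
(* [g] vanishes at [us], so it is bounded away from 0 only on the left half. *)
move=> u0 uus; set m := (u + us) / 2.
have um : u < m by rewrite /m; lra.
have mus : m < us by rewrite /m; lra.
have := @lt_Rintegral_oc _ `]u, us] (cst 0) g u m (A * (us - m) * Fbar F us).
rewrite Rintegral_cst // mul0r; apply => //.
- exact: integrable0.
- apply: (integrable_retention_gain _ us) => // z /=; rewrite !in_itv/= => /andP[uz ->].
  by rewrite andbT (le_trans u0 (ltW uz)).
- by move=> z /=; rewrite in_itv/= => /andP[_ /retention_gain_ge0].
- by move=> z /=; rewrite !in_itv/= => /andP[-> zm]; rewrite (le_trans zm (ltW mus)).
- by rewrite !mulr_gt0 ?Fbar_gt0 ?subr_gt0.
- by move=> z /andP[_ zm]; rewrite /= add0r; exact: retention_gain_ge _ _ zm (ltW mus).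
Qed.

Lemma Rintegral_retention_gain_lt0 (w : R) : us < w ->
  \int[mu]_(z in `]us, w]) g z < 0.
Proof.
move=> usw; set m := (us + w) / 2.
have usm : us < m by rewrite /m; lra.
have mw : m < w by rewrite /m; lra.
have := @lt_Rintegral_oc _ `]us, w] g (cst 0) m w (A * (m - us) * Fbar F w).
rewrite Rintegral_cst // mul0r; apply => //.
- apply: (integrable_retention_gain _ w) => // z /=; rewrite !in_itv/= => /andP[usz ->].
  by rewrite andbT (le_trans (ltW us_gt0) (ltW usz)).
- exact: integrable0.
- by move=> z /=; rewrite in_itv/= => /andP[/ltW/retention_gain_le0].
- by move=> z /=; rewrite !in_itv/= => /andP[mz ->]; rewrite (lt_trans usm).
- by rewrite !mulr_gt0 ?Fbar_gt0 ?subr_gt0.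
- move=> z /andP[mz zw]; have := retention_gain_le _ _ _ (ltW usm) (ltW mz) zw.
  by rewrite /= -lerBrDr sub0r.
Qed.

Lemma retention_objective_lt_EFin (r : R) : 0 <= r -> r != us ->
  (J r%:E < J us%:E)%E.
Proof.
move=> r0 rus; rewrite !retention_objective_EFin ?(ltW us_gt0) // lte_fin.
have int_gain w : mu.-integrable `[0, w] (EFin \o g).
  exact: (integrable_retention_gain _ w).
have [rlt|usr|req] := ltgtP r us; last by rewrite req eqxx in rus.
  rewrite -subr_gt0 (Rintegral_itvB (int_gain us)) ?bnd_simp ?(ltW rlt) //.
  exact: Rintegral_retention_gain_gt0.
rewrite -subr_gt0 -opprB oppr_gt0 (Rintegral_itvB (int_gain r)) ?bnd_simp.
- exact: Rintegral_retention_gain_lt0.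
- exact: ltW.
- exact: ltW.
Qed.

Lemma retention_tail_le (D : set R) : measurable D -> D `<=` `[us, +oo[ ->
  (theta%:E * \int[mu]_(z in D) (Fbar F z)%:E <=
   (A / 2)%:E * \int[mu]_(z in D) (2 * z * Fbar F z)%:E)%E.
Proof.
move=> mD Dus.
have usD z : D z -> us <= z by move=> /Dus; rewrite /= in_itv/= andbT.
have mF : measurable_fun D (EFin \o Fbar F).
  by apply/measurable_EFinP; exact: measurable_Fbar.
have m2 : measurable_fun D (fun z : R => (2 * z * Fbar F z)%:E).
  apply/measurable_EFinP/measurable_funM; first exact: measurable_funM.
  exact: measurable_Fbar.
have nnF z : D z -> (0 <= (Fbar F z)%:E)%E by rewrite lee_fin ltW ?Fbar_gt0.
have nn2 z : D z -> (0 <= (2 * z * Fbar F z)%:E)%E.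
  move=> /usD usz; rewrite lee_fin !mulr_ge0 ?(ltW (Fbar_gt0 z)) //.
  exact: le_trans (ltW us_gt0) usz.
have theta_ge0 : 0 <= theta by rewrite theta_eq mulr_ge0 // ltW.
have A2_ge0 : 0 <= A / 2 by rewrite divr_ge0 // ltW.
rewrite -(ge0_integralZl_EFin mu mD nnF mF theta_ge0).
rewrite -(ge0_integralZl_EFin mu mD nn2 m2 A2_ge0).
apply: ge0_le_integral => //.
- by move=> z Dz; apply: mule_ge0; [rewrite lee_fin | exact: nnF].
- exact: emeasurable_funM.
- exact: emeasurable_funM.
move=> z /usD usz; rewrite -!EFinM lee_fin.
have -> : A / 2 * (2 * z * Fbar F z) = A * z * Fbar F z by field.
by rewrite -subr_le0 -mulrBl; exact: retention_gain_le0.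
Qed.

Lemma retention_objective_pinfty_le (w : R) : us <= w ->
  (\int[mu]_(z in Icc0 +oo) (Fbar F z)%:E < +oo)%E -> (J +oo <= J w%:E)%E.
Proof.
move=> usw Fbar_fin; have w0 : 0 <= w := le_trans (ltW us_gt0) usw.
have Fbar_ge0 z : 0 <= Fbar F z := ltW (Fbar_gt0 z).
have m2id : measurable_fun setT (fun z : R => 2 * z * Fbar F z).
  by apply: measurable_funM; [exact: measurable_funM | exact: measurable_Fbar].
rewrite /retention_objective Icc0_EFin.
rewrite (integral_Icc0_pinfty_split _ _ w0 m2id); last by move=> z z0; rewrite !mulr_ge0.
have mFbar := measurable_Fbar _ measurableT.
rewrite !(integral_Icc0_pinfty_split _ _ w0 mFbar) // in Fbar_fin *.
have tail := @retention_tail_le `]w, +oo[ (measurable_itv _).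
set P := (\int[mu]_(z in _) (Fbar F z)%:E)%E in Fbar_fin *.
set T1 := (\int[mu]_(z in `]w, +oo[%classic) (Fbar F z)%:E)%E in Fbar_fin tail *.
set Q := (\int[mu]_(z in _) (2 * z * Fbar F z)%:E)%E.
set T2 := (\int[mu]_(z in `]w, +oo[%classic) (2 * z * Fbar F z)%:E)%E in tail *.
have Pfin : P \is a fin_num by apply: integrable_fin_num => //; exact: integrable_Fbar.
have Qfin : Q \is a fin_num by apply: integrable_fin_num => //; exact: integrable_2z_Fbar.
have T1_ge0 : (0 <= T1)%E by apply: integral_ge0 => z _; rewrite lee_fin.
have T2_ge0 : (0 <= T2)%E.
  apply: integral_ge0 => z; rewrite /= in_itv/= andbT => /ltW wz.
  by rewrite lee_fin !mulr_ge0 // (le_trans w0).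
have P_ge0 : (0 <= P)%E by apply: integral_ge0 => z _; rewrite lee_fin.
have T1fin : T1 \is a fin_num.
  by rewrite ge0_fin_numE // (le_lt_trans (leeDr _ P_ge0) Fbar_fin).
have {}tail : (theta%:E * T1 <= (A / 2)%:E * T2)%E.
  by apply: tail => z /=; rewrite !in_itv/= !andbT => /ltW; exact: le_trans.
rewrite -(fineK Pfin) -(fineK Qfin) -(fineK T1fin) in tail *.
(* [T2] may be [+oo] (infinite second moment), and then [J +oo = -oo]. *)
clearbody T2; case: T2 tail T2_ge0 => [t2 tail _| _ _ |//].
  by rewrite -!EFinD -!EFinM !lee_fin in tail *; nra.
rewrite addey // mulry gtr0_sg ?divr_gt0 // mul1e.
by rewrite -EFinD -EFinM addeNy leNye.
Qed.

Lemma retention_objective_lt :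
  (\int[mu]_(z in Icc0 +oo) (Fbar F z)%:E < +oo)%E ->
  forall u : \bar R, (0 <= u)%E -> u != us%:E -> (J u < J us%:E)%E.
Proof.
move=> Fbar_fin; case => [r r0 rus | _ _ |//].
  by apply: retention_objective_lt_EFin; rewrite -?lee_fin // -(inj_eq EFin_inj).
have usw : us < us + 1 by rewrite ltrDl.
apply: le_lt_trans (retention_objective_pinfty_le _ (ltW usw) Fbar_fin) _.
by apply: retention_objective_lt_EFin; rewrite ?gt_eqF // (le_trans (ltW us_gt0)) ?ltW.
Qed.

End retention.

Lemma sahara_A_gt0 {R : realType} (alpha b d x : R) : 0 < alpha -> 0 < b ->
  0 < sahara_A alpha b d x.
Proof.
move=> alpha_gt0 b_gt0; rewrite /sahara_A divr_gt0 // sqrtr_gt0.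
by rewrite ltr_wpDr ?sqr_ge0 ?exprn_gt0.
Qed.

Theorem corollary5p8 (R : realType) (F : R -> R) (theta eta alpha b d x : R) :
  is_cdf_on_nonneg F ->
  (forall z : R, 0 <= z -> F z < 1) ->
  (\int[lebesgue_measure]_(z in Icc0 (+oo)%E) (Fbar F z)%:E < +oo)%E ->
  0 < theta -> 0 < eta -> 0 < alpha -> 0 < b ->
  let ustar := theta / sahara_A alpha b d x in
  (forall u : \bar R, (0 <= u)%E ->
     (retention_objective F theta (sahara_A alpha b d x) u
      <= retention_objective F theta (sahara_A alpha b d x) ustar%:E)%E) /\
  (forall u : \bar R, (0 <= u)%E ->
     retention_objective F theta (sahara_A alpha b d x) u
     = retention_objective F theta (sahara_A alpha b d x) ustar%:E ->
     u = ustar%:E).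
Proof.
(* [eta] only enters the drift through a term that does not depend on [u]. *)
move=> [F_nondecr _] F_lt1_ge0 Fbar_fin theta_gt0 _ alpha_gt0 b_gt0 ustar.
have A_gt0 := sahara_A_gt0 _ _ d x alpha_gt0 b_gt0.
have F_lt1 z : F z < 1.
  have [z_lt0|] := ltP z 0; last exact: F_lt1_ge0.
  exact: le_lt_trans (F_nondecr _ _ (ltW z_lt0)) (F_lt1_ge0 _ (lexx 0)).
have ustar_gt0 : 0 < ustar by rewrite divr_gt0.
have theta_eq : theta = sahara_A alpha b d x * ustar by rewrite mulrC divfK ?gt_eqF.
have ustar_max :=
  retention_objective_lt _ F_nondecr F_lt1 _ _ _ A_gt0 ustar_gt0 theta_eq Fbar_fin.
split=> u u_ge0.
  by have [->|/(ustar_max _ u_ge0)/ltW] := eqVneq u ustar%:E.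
by apply: contra_eq => /(ustar_max _ u_ge0)/lt_eqF ->.
Qed.
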